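(* Let $n\ge1$, $1\le k\le n$, and let $(I_2,I_1)$ be a $k\times k$ minor that is not reverse-admissible, with $\Gamma,\tilde\Gamma,\tilde I_1,\tilde I_2,\mathsf F$ as in the context. Then for every $\Gamma'\subset\{1,\dots,n\}\setminus(I_1\cup I_2)$ with $|\Gamma'|=|\tilde\Gamma|$, the PBW-degree of the minor $(\tilde I_2\cup\mathsf F\cup\Gamma',\ \tilde I_1\cup\mathsf F\cup\Gamma')$ is greater than or equal to the PBW-degree of $(I_2,I_1)$. In other words, each summand on the right hand side of the relation $X_{(I_2,I_1)}=\sum_{\Gamma'}(-1)^{|\Gamma'|}X_{(\tilde I_2\cup\mathsf F\cup\Gamma',\tilde I_1\cup\mathsf F\cup\Gamma')}$ has PBW-degree at least that of $X_{(I_2,I_1)}$.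
   Context: A $k\times k$ minor is a pair $(I_2,I_1)$ of subsets of $\{1,\dots,n\}$ with $|I_1|+|I_2|=k$. Put $\Gamma=I_1\cap I_2=\{\gamma_1<\dots<\gamma_t\}$, $\tilde I_1=I_1\setminus\Gamma$, $\tilde I_2=I_2\setminus\Gamma$. The minor is reverse-admissible if there is $T=\{\tau_1<\dots<\tau_t\}\subset\{1,\dots,n\}\setminus(I_1\cup I_2)$ with $\tau_i\le\gamma_i$ for all $i$. For a non-reverse-admissible minor: let $1\le h_0\le t$ be minimal such that there is a subset $\mathsf T\subset\{1,\dots,n\}\setminus(I_1\cup I_2)$ of size $t-h_0$ which is componentwise $\le(\gamma_{h_0+1},\dots,\gamma_t)$ (elements listed increasingly); choose such $\mathsf T_{h_0+1}=\{\lambda_{h_0+1}<\dots<\lambda_t\}$ maximal for the componentwise partial order; let $b\in\{h_0+1,\dots,t\}$ be maximal with $(\lambda_{h_0+1},\dots,\lambda_b)$ componentwise $\le(\gamma_{h_0},\dots,\gamma_{b-1})$, or $b=h_0$ if no such $b$ exists. Set $\tilde\Gamma=\{\gamma_{h_0},\dots,\gamma_b\}$ and $\mathsf F=\Gamma\setminus\tilde\Gamma$. The PBW-degree of a $k\times k$ minor $(I_2,I_1)$ is $\deg(I_2,I_1)=|I_2|+\#\{i\in I_1: i>k\}$; equivalently, it is the number of entries $>k$ of the increasing sequence in $\mathcal N=\{1<\dots<n<\bar n<\dots<\bar1\}$ ($\bar i=2n+1-i$) formed by $I_1\cup\{\bar i:i\in I_2\}$. In the coordinate ring of the complete symplectic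 flag variety, $X_{(I_2,I_1)}$ denotes the corresponding Plücker coordinate (up to a fixed sign convention). *)

(* Subsets of {1,...,n} are encoded as {set 'I_n}, where the
   ordinal i stands for the integer i+1 (see [pos]). *)
From mathcomp Require Import all_boot.
Set Implicit Arguments. Unset Strict Implicit. Unset Printing Implicit Defensive.

Definition pos n (i : 'I_n) : nat := (val i).+1.

Definition sseq n (A : {set 'I_n}) : seq nat := sort leq [seq pos i | i <- enum A].

(* componentwise <= of two increasing lists (all2 also forces equal length) *)
Definition cle (s t : seq nat) : bool := all2 leq s t.

Definition Gam n (I2 I1 : {set 'I_n}) : {set 'I_n} := I1 :&: I2.
Definition compl12 n (I2 I1 : {set 'I_n}) : {set 'I_n} := ~: (I1 :|: I2).
Definition gseq n (I2 I1 : {set 'I_n}) : seq nat := sseq (Gam I2 I1).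

Definition reverse_admissible n (I2 I1 : {set 'I_n}) : Prop :=
  exists T : {set 'I_n}, T \subset compl12 I2 I1 /\ cle (sseq T) (gseq I2 I1).

(* there is T in the complement, |T| = t-h, componentwise <= (gamma_{h+1},...,gamma_t) *)
Definition h_ok n (I2 I1 : {set 'I_n}) (h : nat) : Prop :=
  exists T : {set 'I_n}, T \subset compl12 I2 I1 /\ cle (sseq T) (drop h (gseq I2 I1)).

Definition is_h0 n (I2 I1 : {set 'I_n}) (h0 : nat) : Prop :=
  [/\ 1 <= h0 <= #|Gam I2 I1|, h_ok I2 I1 h0 &
      forall h, 1 <= h < h0 -> ~ h_ok I2 I1 h].

Definition is_Lam n (I2 I1 : {set 'I_n}) (h0 : nat) (Lam : {set 'I_n}) : Prop :=
  [/\ Lam \subset compl12 I2 I1, cle (sseq Lam) (drop h0 (gseq I2 I1)) &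
      forall T : {set 'I_n}, T \subset compl12 I2 I1 ->
        cle (sseq T) (drop h0 (gseq I2 I1)) -> cle (sseq Lam) (sseq T) -> T = Lam].

(* b in {h0+1..t} with (lambda_{h0+1},..,lambda_b) <= (gamma_{h0},..,gamma_{b-1}) *)
Definition bcond n (I2 I1 : {set 'I_n}) (h0 : nat) (Lam : {set 'I_n}) (b : nat) : bool :=
  (h0 < b <= #|Gam I2 I1|) &&
  cle (take (b - h0) (sseq Lam)) (take (b - h0) (drop h0.-1 (gseq I2 I1))).

Definition is_b n (I2 I1 : {set 'I_n}) (h0 : nat) (Lam : {set 'I_n}) (b : nat) : Prop :=
  (bcond I2 I1 h0 Lam b /\ forall b', bcond I2 I1 h0 Lam b' -> b' <= b) \/
  (b = h0 /\ forall b', ~~ bcond I2 I1 h0 Lam b').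

(* tilde Gamma = {gamma_{h0}, ..., gamma_b}: elements of Gamma of rank in [h0, b] *)
Definition tGam n (I2 I1 : {set 'I_n}) (h0 b : nat) : {set 'I_n} :=
  [set i in Gam I2 I1 | h0 <= (index (pos i) (gseq I2 I1)).+1 <= b].

Definition Fset n (I2 I1 : {set 'I_n}) (h0 b : nat) : {set 'I_n} :=
  Gam I2 I1 :\: tGam I2 I1 h0 b.

Definition pbw_deg n (k : nat) (I2 I1 : {set 'I_n}) : nat :=
  #|I2| + #|[set i in I1 | k < pos i]|.

(** Since (I2, I1) is not reverse-admissible and h0 is minimal, no subset of the
    complement C of I1 ∪ I2 fits componentwise under (γ_{h0}, ..., γ_t).  By the
    greedy (Hall-type) criterion some γ_j with j >= h0 then has at most j - h0
    elements of C below it.  Among 1..k at most |I1 ∪ I2| = k - t numbers lie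
    outside C, so C has at least t elements <= k, whence γ_j < k.  The same
    count forbids b > j (the λ's lie in C), so all of Γ~ = {γ_{h0}, ..., γ_b} is
    smaller than k.  Exchanging Γ~ for Γ' keeps |I2| and only removes from I1
    elements <= k, so the PBW-degree cannot drop. *)

From mathcomp Require Import all_boot zify.
Set Implicit Arguments. Unset Strict Implicit. Unset Printing Implicit Defensive.

Lemma cleP (s t : seq nat) :
  reflect (size s = size t /\ forall r, r < size s -> nth 0 s r <= nth 0 t r)
          (cle s t).
Proof.
elim: s t => [|x s IHs] [|y t] /=; try by constructor=> // -[].
apply: (iffP andP) => [[le_xy /IHs [-> le_st]] | [[eq_st] le_st]].
  by split=> // -[|r] //= /le_st.
by split; [exact: (le_st 0) | apply/IHs; split=> // r /(le_st r.+1)].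
Qed.

Lemma sorted_nth_leq_count (s : seq nat) r v : sorted leq s -> r < size s ->
  (nth 0 s r <= v) = (r < count (leq^~ v) s).
Proof.
elim: s r => [//|x s IHs] r /=; rewrite (path_sortedE leq_trans).
case/andP=> /allP x_le_s sorted_s lt_r_s.
have count_gt (lt_v_x : v < x) : count (leq^~ v) s = 0.
  rewrite -(count_pred0 s); apply: eq_in_count => y /x_le_s le_xy /=.
  by apply/negbTE; rewrite -ltnNge (leq_trans lt_v_x).
case: r lt_r_s => [|r] /= lt_r_s.
  by case: (leqP x v) => [//|/count_gt ->].
rewrite IHs //; case: (leqP x v) => [_|/count_gt ->]; first by rewrite add1n.
by rewrite ltn0.
Qed.

Section CardUpto.

Variable n : nat.
Implicit Types (A B : {set 'I_n}) (v w : nat).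

Definition card_upto A v := #|[set i in A | pos i <= v]|.

Lemma size_sseq A : size (sseq A) = #|A|.
Proof. by rewrite /sseq size_sort size_map cardE. Qed.

Lemma sorted_sseq A : sorted leq (sseq A).
Proof. exact: (sort_sorted leq_total). Qed.

Lemma mem_sseq A i : (pos i \in sseq A) = (i \in A).
Proof.
rewrite /sseq mem_sort mem_map ?mem_enum //.
by move=> i1 i2 [/val_inj].
Qed.

Lemma uniq_sseq A : uniq (sseq A).
Proof.
rewrite /sseq sort_uniq map_inj_uniq ?enum_uniq //.
by move=> i1 i2 [/val_inj].
Qed.

Lemma card_upto_count A v : card_upto A v = count (leq^~ v) (sseq A).
Proof.
rewrite /card_upto /sseq count_sort count_map -size_filter.
rewrite -(card_uniqP (filter_uniq _ (enum_uniq (mem A)))).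
by apply: eq_card => i; rewrite !inE mem_filter mem_enum andbC.
Qed.

Lemma nth_sseq_leq A r v : r < #|A| ->
  (nth 0 (sseq A) r <= v) = (r < card_upto A v).
Proof.
by rewrite card_upto_count -size_sseq; apply/sorted_nth_leq_count/sorted_sseq.
Qed.

Lemma card_upto0 A : card_upto A 0 = 0.
Proof. by apply: eq_card0 => i; rewrite !inE ltn0 andbF. Qed.

Lemma card_upto_full A : card_upto A n = #|A|.
Proof. by apply: eq_card => i; rewrite !inE ltn_ord andbT. Qed.

Lemma card_uptoS A v : card_upto A v.+1 <= (card_upto A v).+1.
Proof.
have count_leqS (s : seq nat) :
    count (leq^~ v.+1) s = count (leq^~ v) s + count_mem v.+1 s.
  by elim: s => //= x s ->; case: ltngtP; lia.
rewrite !card_upto_count count_leqS count_uniq_mem ?uniq_sseq //.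
by case: (_ \in _); rewrite ?addn1 ?addn0.
Qed.

Lemma card_upto_mono A B v w :
  A \subset B -> v <= w -> card_upto A v <= card_upto B w.
Proof.
move=> /subsetP sAB le_vw; apply/subset_leq_card/subsetP => i.
by rewrite !inE => /andP [/sAB -> le_iv]; rewrite (leq_trans le_iv).
Qed.

Lemma card_upto_surj A v m : m <= card_upto A v -> exists w, card_upto A w = m.
Proof.
elim: v => [|v IHv] le_m.
  by exists 0; move: le_m; rewrite card_upto0 leqn0 => /eqP ->.
have [/IHv //|lt_m] := leqP m (card_upto A v).
exists v.+1; apply/eqP; rewrite eqn_leq le_m andbT.
exact: leq_trans (card_uptoS A v) lt_m.
Qed.

Lemma card_upto_restrict A v w :
  card_upto [set i in A | pos i <= w] v = card_upto A (minn v w).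
Proof. by apply: eq_card => i; rewrite !inE leq_min andbAC -andbA. Qed.

(* The witness is the set of the [size g] smallest elements of C. *)
Lemma exists_subset_cle (C : {set 'I_n}) (g : seq nat) :
  size g <= #|C| -> (forall r, r < size g -> r < card_upto C (nth 0 g r)) ->
  exists2 T : {set 'I_n}, T \subset C & cle (sseq T) g.
Proof.
rewrite -card_upto_full => /card_upto_surj [w card_w] g_rich.
exists [set i in C | pos i <= w]; first by apply/subsetP => i; rewrite inE => /andP [].
apply/cleP; rewrite size_sseq; split=> [//|r lt_r_g].
rewrite nth_sseq_leq ?card_upto_restrict //.
have lt_r_size : r < size g by rewrite -card_w.
by case: (leqP (nth 0 g r) w) => _; [exact: g_rich | rewrite card_w].
Qed.

End CardUpto.

Lemma card_Gam_le_card_upto_compl n k (I2 I1 : {set 'I_n}) :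
  k <= n -> #|I1| + #|I2| = k -> #|Gam I2 I1| <= card_upto (compl12 I2 I1) k.
Proof.
move=> le_k_n card_minor; set K : {set 'I_n} := [set i | pos i <= k].
have card_K : k <= #|K|.
  have widen_inj : injective (widen_ord le_k_n) by move=> i j [/val_inj].
  rewrite -[k in k <= _]card_ord -(card_imset _ widen_inj).
  by apply/subset_leq_card/subsetP => _ /imsetP [i _ ->]; rewrite inE /pos /=.
have -> : card_upto (compl12 I2 I1) k = #|K :\: (I1 :|: I2)|.
  by apply: eq_card => i; rewrite !inE andbC.
have := cardsUI I1 I2; have := cardsID (I1 :|: I2) K.
have := subset_leq_card (subsetIr K (I1 :|: I2)); rewrite /Gam; lia.
Qed.

Lemma setDU_nested (T : finType) (A B X : {set T}) :
  X \subset B -> B \subset A -> A :\: B :|: (B :\: X) = A :\: X.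
Proof.
move=> /subsetP sXB /subsetP sBA; apply/setP => i; rewrite !inE.
have [iB | iNB] := boolP (i \in B); first by rewrite (sBA i iB).
by rewrite (contraNN (sXB i) iNB) andbF orbF.
Qed.

Lemma pbw_deg_exchange n k (I2 I1 X Y : {set 'I_n}) :
  X \subset I2 -> [disjoint Y & I2] -> #|Y| = #|X| ->
  {in X, forall i, pos i <= k} ->
  pbw_deg k I2 I1 <= pbw_deg k (I2 :\: X :|: Y) (I1 :\: X :|: Y).
Proof.
move=> sXI2 disjYI2 card_Y X_le_k; apply: leq_add.
  rewrite cardsU; have -> : (I2 :\: X) :&: Y = set0.
    by rewrite setIC setDE setIA (disjoint_setI0 disjYI2) set0I.
  by rewrite cards0 subn0 cardsDS // card_Y subnK ?subset_leq_card.
apply/subset_leq_card/subsetP => i; rewrite !inE => /andP [iI1 lt_k_i].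
rewrite iI1 lt_k_i !andbT; apply/orP; left.
by apply/negP => iX; have /= := X_le_k i iX; rewrite leqNgt lt_k_i.
Qed.

Section NonReverseAdmissible.

Variables (n k : nat) (I2 I1 : {set 'I_n}) (h0 : nat) (Lam : {set 'I_n}) (b : nat).
Hypotheses (not_ra : ~ reverse_admissible I2 I1) (h0P : is_h0 I2 I1 h0).

Local Notation G := (Gam I2 I1).
Local Notation C := (compl12 I2 I1).
Local Notation gam := (gseq I2 I1).

(* Indices are 0-based: [nth 0 gam j] is γ_{j+1} and [h0.-1] is the
   index of γ_{h0}. *)

Let size_gam : size gam = #|G|. Proof. exact: size_sseq. Qed.

Lemma tGam_le_nth_gam j i : b <= j.+1 -> j < #|G| ->
  i \in tGam I2 I1 h0 b -> pos i <= nth 0 gam j.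
Proof.
move=> le_b_j lt_j_G; rewrite inE => /andP [iG /andP [_ le_idx_b]].
have gam_i : pos i \in gam by rewrite mem_sseq.
rewrite -(nth_index 0 gam_i).
apply: (sorted_leq_nth leq_trans leqnn _ (sorted_sseq _));
  rewrite ?inE ?index_mem ?size_gam //.
exact: leq_trans le_idx_b le_b_j.
Qed.

Lemma not_cle_drop_pred_h0 (T : {set 'I_n}) :
  T \subset C -> ~~ cle (sseq T) (drop h0.-1 gam).
Proof.
case: h0P => /andP [ge1_h0 _] _ h0_min sTC; apply/negP => cle_T.
have [le1_h0 | lt1_h0] := leqP h0 1.
  by apply: not_ra; exists T; rewrite -(drop0 gam) -(_ : h0.-1 = 0) //; lia.
by apply: (h0_min h0.-1); [lia | exists T].
Qed.

Lemma b_le_deficient j : h0.-1 <= j -> card_upto C (nth 0 gam j) <= j - h0.-1 ->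
  Lam \subset C -> is_b I2 I1 h0 Lam b -> b <= j.+1.
Proof.
case: h0P => /andP [ge1_h0 _] _ _ le_h0_j deficient sLamC bP.
have bcond_le b' : bcond I2 I1 h0 Lam b' -> b' <= j.+1.
  case/andP => /andP [lt_h0_b' le_b'_t] /cleP [size_eq le_nth].
  rewrite leqNgt; apply/negP => lt_j_b'; set r := j - h0.-1.
  have lt_r_b' : r < b' - h0 by rewrite /r; lia.
  rewrite [size (take _ (drop _ _))]size_takel ?size_drop ?size_gam in size_eq; last lia.
  have lt_r_take : r < size (take (b' - h0) (sseq Lam)) by rewrite size_eq.
  have lt_r_Lam : r < #|Lam|.
    by rewrite -size_sseq (leq_trans lt_r_take) // size_take_min geq_minr.
  have lam_le_gam : nth 0 (sseq Lam) r <= nth 0 gam j.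
    by have := le_nth r lt_r_take; rewrite !nth_take // nth_drop subnKC.
  rewrite nth_sseq_leq // in lam_le_gam.
  by have := card_upto_mono sLamC (leqnn (nth 0 gam j)); lia.
case: bP => [[/bcond_le //] | [-> _]]; lia.
Qed.

Hypotheses (le_k_n : k <= n) (card_minor : #|I1| + #|I2| = k).

Let card_Gam_le : #|G| <= card_upto C k.
Proof. exact: card_Gam_le_card_upto_compl. Qed.

Lemma lt_k_of_card_upto_lt v : card_upto C v < #|G| -> v < k.
Proof.
move=> lt_v_G; rewrite ltnNge; apply: contraTN lt_v_G => le_k_v.
by rewrite -leqNgt (leq_trans card_Gam_le) ?card_upto_mono.
Qed.

Lemma exists_deficient_gamma :
  exists2 j, h0.-1 <= j < #|G| & card_upto C (nth 0 gam j) <= j - h0.-1.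
Proof.
set g := drop h0.-1 gam.
have size_g : size g <= #|C|.
  rewrite size_drop size_gam (leq_trans (leq_subr _ _)) //.
  by rewrite (leq_trans card_Gam_le) // -card_upto_full card_upto_mono.
have : ~~ all (fun r => r < card_upto C (nth 0 g r)) (iota 0 (size g)).
  apply/negP => /allP g_rich.
  have [r lt_r|T sTC] := exists_subset_cle size_g.
    by apply: g_rich; rewrite mem_iota.
  exact/negP/not_cle_drop_pred_h0.
case/allPn => r; rewrite mem_iota size_drop size_gam -leqNgt nth_drop.
move=> /andP [_ lt_r] deficient.
exists (h0.-1 + r); first by rewrite leq_addr -ltn_subRL.
by rewrite addKn.
Qed.

End NonReverseAdmissible.

Theorem lemma4p20 (n k : nat) (I2 I1 : {set 'I_n}) (h0 : nat) (Lam : {set 'I_n}) (b : nat) :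
  1 <= n -> 1 <= k <= n -> #|I1| + #|I2| = k ->
  ~ reverse_admissible I2 I1 ->
  is_h0 I2 I1 h0 -> is_Lam I2 I1 h0 Lam -> is_b I2 I1 h0 Lam b ->
  forall Gam' : {set 'I_n},
    Gam' \subset compl12 I2 I1 -> #|Gam'| = #|tGam I2 I1 h0 b| ->
    pbw_deg k I2 I1 <=
    pbw_deg k ((I2 :\: Gam I2 I1) :|: Fset I2 I1 h0 b :|: Gam')
              ((I1 :\: Gam I2 I1) :|: Fset I2 I1 h0 b :|: Gam').
Proof.
move=> _ /andP [_ le_k_n] card_minor not_ra h0P [sLamC _ _] bP Gam' sGam'C card_Gam'.
have [j /andP [le_h0_j lt_j_G] deficient] :=
  exists_deficient_gamma not_ra h0P le_k_n card_minor.
have le_b_j := b_le_deficient h0P le_h0_j deficient sLamC bP.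
have gam_j_lt_k : nth 0 (gseq I2 I1) j < k.
  apply: (lt_k_of_card_upto_lt le_k_n card_minor).
  exact: leq_ltn_trans (leq_trans deficient (leq_subr _ _)) lt_j_G.
have sTG : tGam I2 I1 h0 b \subset Gam I2 I1.
  by apply/subsetP => i; rewrite inE => /andP [].
rewrite /Fset (setDU_nested sTG (subsetIr I1 I2)) (setDU_nested sTG (subsetIl I1 I2)).
apply: pbw_deg_exchange => //.
- exact: subset_trans sTG (subsetIr I1 I2).
- rewrite -(setCK I2) -subsets_disjoint (subset_trans sGam'C) //.
  by rewrite /compl12 setCS subsetUr.
- move=> i /(tGam_le_nth_gam le_b_j lt_j_G) le_i_j.
  exact/ltnW/(leq_ltn_trans le_i_j).
Qed.
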